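(* Let $G=(V,E)$ be any $n$-vertex $d$-regular graph with girth at least $g$, and let $m\in\mathbb{N}$. For any map $\psi:V\to V$ with $\mathrm{rad}_G(\psi)<g/2-1$, we have $$\Pr_{v\sim V,\ u_1,\dots,u_m\sim N_G(v)}\left[|\psi(\{u_1,\dots,u_m\})|<m\right]<\frac{m^2}{\sqrt{d}},$$ where $v$ is uniform on $V$ and, given $v$, $u_1,\dots,u_m$ are i.i.d. uniform samples from $N_G(v)$.
   Context: $G$ is an undirected unweighted graph; $d_G$ denotes its shortest-path metric and $N_G(v)$ the set of neighbors of $v$. The girth of $G$ is the length of its shortest cycle. For $\psi:V\to V$, $\mathrm{rad}_G(\psi)=\max_{v\in V}d_G(v,\psi(v))$. *)

From mathcomp Require Import all_boot all_order all_algebra.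
Set Implicit Arguments. Unset Strict Implicit. Unset Printing Implicit Defensive.
Import Order.TTheory GRing.Theory Num.Theory.

Section Graph.
Variables (T : finType) (e : rel T).

Definition simple_graph := symmetric e /\ irreflexive e.

Definition nbhd (v : T) : {set T} := [set u | e v u].

Definition regular (d : nat) := forall v, #|nbhd v| = d.

Definition is_cycle (c : seq T) := [&& cycle e c, uniq c & 2 < size c].

(* girth >= g : every cycle has length >= g (vacuous for forests, girth = oo) *)
Definition girth_ge (g : nat) := forall c, is_cycle c -> g <= size c.

Definition walk_of_len (x y : T) (k : nat) : bool :=
  [exists p : k.-tuple T, path e x p && (last x p == y)].

(* shortest-path distance; None = infinite (x, y in different components).
   A shortest walk has length < #|T|. *)
Definition dist (x y : T) : option nat :=
  if has (walk_of_len x y) (iota 0 #|T|)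
  then Some (find (walk_of_len x y) (iota 0 #|T|)) else None.

(* graph_rad = rad_G(psi) = max_v d_G(v, psi v); None = infinite *)
Definition graph_rad (psi : T -> T) : option nat :=
  if [forall v, dist v (psi v) != None]
  then Some (\max_(v : T) odflt 0 (dist v (psi v))) else None.

End Graph.

Local Open Scope ring_scope.

(* Pr_{v ~ V, u_1..u_m ~ N(v) iid uniform} [ |psi({u_1..u_m})| < m ] *)
Definition collision_prob (R : fieldType) (T : finType) (e : rel T)
    (psi : T -> T) (m : nat) : R :=
  (#|T|%:R)^-1 * \sum_(v : T)
     (#|nbhd e v|%:R ^+ m)^-1 *
     #|[set f : {ffun 'I_m -> T} |
          [forall i, f i \in nbhd e v] &&
          (#|[set psi (f i) | i : 'I_m]| < m)%N]|%:R.

(* Call a neighbour u of v closer when v is strictly nearer to psi(u) than u is, and let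
   B(v) be the set of closer neighbours of v.  Since 2 rad(psi) + 2 < girth, two geodesics
   leaving a vertex through distinct neighbours and meeting within distance rad(psi) would
   close a cycle that is too short.  Hence every u is a closer neighbour of at most one v,
   so sum_v |B(v)| <= n; and two distinct neighbours u, u' of v with psi(u) = psi(u')
   cannot both lie outside B(v).  A collision among samples u_1, ..., u_m from N(v)
   therefore needs a pair i <> j with u_i = u_j, u_i in B(v) or u_j in B(v), which bounds
   the collision probability at v by min(1, m(m-1)(1 + 2|B(v)|)/d).  Averaging over v
   gives min(1, 3m(m-1)/d), which is below m^2/sqrt d. *)

From mathcomp Require Import all_boot all_order all_algebra.
Import Order.TTheory GRing.Theory Num.Theory.
From mathcomp Require Import zify ring lra.
Set Implicit Arguments. Unset Strict Implicit.

Lemma leq_card_bigcup (T I : finType) (P : pred I) (A : I -> {set T}) (S : {set T}) :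
  S \subset \bigcup_(i | P i) A i -> #|S| <= \sum_(i | P i) #|A i|.
Proof.
move=> sSA; apply: leq_trans (subset_leq_card sSA) _.
elim/big_rec2: _ => [|i U k _ IH]; first by rewrite cards0.
by apply: leq_trans (leq_card_setU _ _) _; rewrite leq_add2l.
Qed.

Section FfunCounting.
Variables (T : finType) (m : nat).

Lemma card_ffun_split_coord (i : 'I_m) (X Y : {set T}) :
  #|[set f : {ffun 'I_m -> T} | [forall k, f k \in (if k == i then X else Y)]]|
  = #|X| * #|Y| ^ m.-1.
Proof.
pose F k := [pred x | x \in (if k == i then X else Y)].
rewrite (@eq_card _ _ (family F)); last first.
  by move=> f; rewrite inE; apply/forallP/familyP => fF k; have := fF k; rewrite inE.
rewrite card_family foldrE big_map big_enum /= (bigD1 i) //= /F eqxx.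
rewrite (eq_bigr (fun _ => #|Y|)); last by move=> k /negbTE ->.
by rewrite prod_nat_const cardC1 card_ord.
Qed.

Lemma card_ffun_eq_coords (N : {set T}) (i j : 'I_m) : i != j ->
  #|[set f : {ffun 'I_m -> T} | [forall k, f k \in N] && (f i == f j)]| <= #|N| ^ m.-1.
Proof.
move=> neq_ij; set E := [set f | _].
have [->|[f0 _]] := set_0Vmem E; first by rewrite cards0.
pose h (f : {ffun 'I_m -> T}) := [ffun k => if k == j then f0 j else f k].
have inj_h : {in E &, injective h}.
  move=> f1 f2; rewrite !inE => /andP [_ /eqP f1ij] /andP [_ /eqP f2ij] /ffunP h12.
  apply/ffunP => k; have := h12 k; rewrite !ffunE.
  case: eqP => [->|//] _; rewrite -f1ij -f2ij.
  by have := h12 i; rewrite !ffunE (negbTE neq_ij).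
rewrite -(card_in_imset inj_h) -[#|N| ^ _]mul1n -(cards1 (f0 j)) -(card_ffun_split_coord j).
apply/subset_leq_card/subsetP => _ /imsetP [f + ->]; rewrite !inE => /andP [/forallP fN _].
by apply/forallP => k; rewrite ffunE; case: eqP => _; rewrite ?inE.
Qed.

Variables (aT : finType) (phi : T -> aT) (N B : {set T}).

Lemma card_ffun_phi_eq_coords (i j : 'I_m) : i != j ->
  (forall u u', u \in N -> u' \in N -> u != u' -> phi u = phi u' -> (u \in B) || (u' \in B)) ->
  #|[set f : {ffun 'I_m -> T} | [forall k, f k \in N] && (phi (f i) == phi (f j))]|
    <= (1 + 2 * #|B|) * #|N| ^ m.-1.
Proof.
move=> neq_ij collideB.
pose G l := [set f : {ffun 'I_m -> T} | [forall k, f k \in (if k == l then B else N)]].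
have sub_EG : [set f : {ffun 'I_m -> T} | [forall k, f k \in N] && (phi (f i) == phi (f j))]
    \subset [set f : {ffun 'I_m -> T} | [forall k, f k \in N] && (f i == f j)] :|: G i :|: G j.
  apply/subsetP => f; rewrite !inE => /andP [/forallP fN /eqP phi_ij].
  have [_|neq_fij] := eqVneq (f i) (f j); first by rewrite (introT forallP fN).
  have inG l : f l \in B -> [forall k, f k \in (if k == l then B else N)].
    by move=> flB; apply/forallP => k; case: eqP => [->|_].
  by case/orP: (collideB _ _ (fN i) (fN j) neq_fij phi_ij) => /inG ->; rewrite !orbT.
apply: leq_trans (subset_leq_card sub_EG) _.
rewrite mulnDl mul1n mul2n -addnn mulnDl addnA.
apply: leq_trans (leq_card_setU _ _) _; rewrite card_ffun_split_coord leq_add2r.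
apply: leq_trans (leq_card_setU _ _) _; rewrite card_ffun_split_coord leq_add2r.
exact: card_ffun_eq_coords.
Qed.

Lemma card_ffun_noninjective (K : nat) :
  (forall i j : 'I_m, i != j ->
     #|[set f : {ffun 'I_m -> T} | [forall k, f k \in N] && (phi (f i) == phi (f j))]| <= K) ->
  #|[set f : {ffun 'I_m -> T} | [forall k, f k \in N] && (#|[set phi (f i) | i : 'I_m]| < m)]|
    <= m * (m.-1 * K).
Proof.
move=> pairK.
pose A i j := [set f : {ffun 'I_m -> T} | [forall k, f k \in N] && (phi (f i) == phi (f j))].
have sub_A :
    [set f : {ffun 'I_m -> T} | [forall k, f k \in N] && (#|[set phi (f i) | i : 'I_m]| < m)]
    \subset \bigcup_i \bigcup_(j | j != i) A i j.
  apply/subsetP => f; rewrite inE => /andP [fN small_img].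
  have /injectivePn [i [j neq_ji phi_ij]] : ~~ injectiveb (fun i => phi (f i)).
    by apply: contraL small_img => /injectiveP inj; rewrite card_imset // card_ord ltnn.
  apply/bigcupP; exists i => //; apply/bigcupP; exists j; first by rewrite eq_sym.
  by rewrite inE fN phi_ij eqxx.
apply: leq_trans (leq_card_bigcup sub_A) _.
rewrite -[m in m * _]card_ord -sum_nat_const; apply: leq_sum => i _.
apply: leq_trans (leq_card_bigcup (subxx _)) _.
apply: (@leq_trans (\sum_(j | j != i) K)).
  by apply: leq_sum => j; rewrite eq_sym; apply: pairK.
by rewrite sum_nat_const cardC1 card_ord.
Qed.

End FfunCounting.

Section Walks.
Variables (T : finType) (e : rel T).

Lemma walk_of_dist x y k : dist e x y = Some k ->
  exists p : seq T, [/\ path e x p, last x p = y & size p = k].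
Proof.
rewrite /dist; case: ifP => // has_walk [<-].
have := nth_find 0 has_walk; rewrite nth_iota; last by rewrite has_find size_iota in has_walk.
by rewrite add0n => /existsP [p /andP [e_p /eqP last_p]]; exists p; rewrite size_tuple.
Qed.

Lemma dist_le_walk x p : path e x p ->
  exists2 k, dist e x (last x p) = Some k & k <= size p.
Proof.
move=> e_p.
have [q [e_q last_q le_qp lt_qT]] : exists q : seq T, [/\ path e x q, last x q = last x p,
    size q <= size p & size q < #|T|].
  have [lt_pT|le_Tp] := ltnP (size p) #|T|; first by exists p.
  case: (shortenP e_p) => q e_q uniq_q _.
  have lt_qT : size (x :: q) <= #|T| by rewrite -(card_uniqP uniq_q) max_card.
  by exists q; split => //; rewrite (leq_trans _ le_Tp) // ltnW.
have walk_q : walk_of_len e x (last x p) (size q).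
  by apply/existsP; exists (in_tuple q); rewrite /= e_q last_q eqxx.
have has_walk : has (walk_of_len e x (last x p)) (iota 0 #|T|).
  by apply/hasP; exists (size q); rewrite ?mem_iota.
rewrite /dist has_walk; eexists; first by [].
apply: leq_trans le_qp; rewrite leqNgt; apply/negP => lt_q.
by have := before_find 0 lt_q; rewrite nth_iota // add0n walk_q.
Qed.

Lemma dist_edge x y w k : e x y -> dist e y w = Some k ->
  exists2 t, dist e x w = Some t & t <= k.+1.
Proof.
move=> e_xy /walk_of_dist [p [e_p <- <-]].
by have := @dist_le_walk x (y :: p); rewrite /= e_xy; apply.
Qed.

Lemma geodesic_of_dist x w k : dist e x w = Some k ->
  exists p, [/\ path e x p, last x p = w, uniq (x :: p), size p <= k &
    forall z, z \in p -> exists2 k', dist e z w = Some k' & k' < k].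
Proof.
move=> /walk_of_dist [p0 [e_p0 last_p0 size_p0]].
case: (shortenP e_p0) last_p0 => p e_p uniq_p sub_p last_p.
have le_p : size p <= k.
  rewrite -size_p0 -ltnS; apply: (uniq_leq_size (s2 := x :: p0)) uniq_p _ => z.
  by rewrite !inE => /orP [->|/sub_p ->]; rewrite ?orbT.
exists p; split => // z z_p; move: e_p last_p le_p; case/splitPr: z_p => p1 p2.
rewrite cat_path last_cat /= => /and3P [_ _ e_p2] last_p2 le_p12.
have [k' dist_z le_k'] := dist_le_walk e_p2; exists k'; first by rewrite -last_p2.
by apply: leq_ltn_trans le_k' _; apply: leq_trans le_p12; rewrite size_cat /= addnS ltnS leq_addl.
Qed.

End Walks.

Section Girth.
Variables (T : finType) (e : rel T).
Hypothesis e_sym : symmetric e.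

Lemma two_paths_cycle x s1 s2 :
  path e x s1 -> path e x s2 -> uniq (x :: s1) -> uniq (x :: s2) ->
  has (mem s2) s1 -> head x s1 != head x s2 ->
  exists2 c, is_cycle e c & size c <= size s1 + size s2.
Proof.
move=> + + + + meet; case: {meet}(split_find meet) => z p1 p2 z_s2 p1_s2.
move: p1_s2; case/path.splitP: z_s2 => q1 q2 p1_s2 e_s1 e_s2 uniq_s1 uniq_s2 neq_heads.
move: e_s1 e_s2; rewrite !cat_path !last_rcons => /andP [e_p1 _] /andP [e_q1 _].
have e_p1_rev : path e z (rcons (rev p1) x).
  have := rev_path e x (rcons p1 z); rewrite last_rcons belast_rcons rev_cons => ->.
  by rewrite (eq_path (e' := e)) // => u v; rewrite e_sym.
exists (x :: rcons q1 z ++ rev p1); last first.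
  by rewrite /= !size_cat !size_rcons size_rev /=; lia.
apply/and3P; split.
- by rewrite /cycle rcons_cat cat_path last_rcons e_q1.
- rewrite cons_uniq mem_cat mem_rev negb_or cat_uniq rev_uniq has_rev.
  move: uniq_s1 uniq_s2; rewrite !cons_uniq !mem_cat !cat_uniq !negb_or mem_rcons inE.
  rewrite rcons_uniq negb_or => /and4P [/andP [/andP [_ ->] _] /andP [_ ->] _ _].
  case/and4P => /andP [-> _] -> _ _ /=; rewrite andbT.
  by apply: contra p1_s2 => /sub_has; apply => u u_q1; rewrite /= mem_cat u_q1.
- rewrite /= size_cat size_rcons size_rev addSn !ltnS.
  case: q1 p1 neq_heads {e_q1 e_p1 e_p1_rev p1_s2 uniq_s1 uniq_s2} => [|? ?] [|? ?] //=.
  by rewrite eqxx.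
Qed.

Hypothesis e_irr : irreflexive e.

Lemma girth_le_two_geodesics g x a b w t ka kb : girth_ge e g ->
  e x a -> e x b -> a != b -> dist e x w = Some t ->
  dist e a w = Some ka -> dist e b w = Some kb -> ka <= t -> kb <= t ->
  g <= ka + kb + 2.
Proof.
move=> girth_g exa exb neq_ab dist_x dist_a dist_b le_at le_bt.
have uniq_cons y ky p : e x y -> ky <= t -> uniq (y :: p) ->
    (forall z, z \in p -> exists2 k', dist e z w = Some k' & k' < ky) -> uniq (x :: y :: p).
  move=> exy le_yt uniq_p closer_p; rewrite cons_uniq uniq_p andbT inE negb_or.
  apply/andP; split; first by apply: contraTneq exy => ->; rewrite e_irr.
  apply/negP => /closer_p [k']; rewrite dist_x => -[<-].
  by rewrite ltnNge le_yt.
have [pa [e_pa last_pa uniq_pa size_pa closer_pa]] := geodesic_of_dist dist_a.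
have [pb [e_pb last_pb uniq_pb size_pb closer_pb]] := geodesic_of_dist dist_b.
have meet : has (mem (b :: pb)) (a :: pa).
  by apply/hasP; exists w; [rewrite -{1}last_pa | rewrite -last_pb]; apply: mem_last.
have e_apa : path e x (a :: pa) by rewrite /= exa.
have e_bpb : path e x (b :: pb) by rewrite /= exb.
have [c cycle_c size_c] := two_paths_cycle e_apa e_bpb
  (uniq_cons _ _ _ exa le_at uniq_pa closer_pa) (uniq_cons _ _ _ exb le_bt uniq_pb closer_pb)
  meet neq_ab.
by apply: leq_trans (girth_g c cycle_c) (leq_trans size_c _) => /=; lia.
Qed.

End Girth.

Section Displacement.
Variables (T : finType) (e : rel T) (psi : T -> T) (g r : nat).
Hypotheses (e_sym : symmetric e) (e_irr : irreflexive e) (girth_g : girth_ge e g).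
Hypothesis rad_lt_girth : 2 * r + 2 < g.
Hypothesis rad_psi : forall u, exists2 k, dist e u (psi u) = Some k & k <= r.

(* The default [0] of [odflt] is never used: both distances are finite, see [dist_nbr_psi]. *)
Definition closer_nbrs v :=
  [set u | e v u & odflt 0 (dist e v (psi u)) < odflt 0 (dist e u (psi u))].

Lemma dist_nbr_psi v u : e v u -> exists t, dist e v (psi u) = Some t.
Proof.
move=> e_vu; have [k dist_u _] := rad_psi u.
by have [t dist_v _] := dist_edge e_vu dist_u; exists t.
Qed.

Lemma closer_nbrs_unique u v1 v2 :
  u \in closer_nbrs v1 -> u \in closer_nbrs v2 -> v1 = v2.
Proof.
rewrite !inE => /andP [e_v1u lt1] /andP [e_v2u lt2].
have [k dist_u le_kr] := rad_psi u.
have [t1 dist_v1] := dist_nbr_psi e_v1u; have [t2 dist_v2] := dist_nbr_psi e_v2u.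
move: lt1 lt2; rewrite dist_u dist_v1 dist_v2 /= => lt1 lt2.
apply/eqP; apply: contraLR rad_lt_girth => neq_v12; rewrite -leqNgt.
rewrite e_sym in e_v1u; rewrite e_sym in e_v2u.
have := girth_le_two_geodesics e_sym e_irr girth_g e_v1u e_v2u neq_v12 dist_u dist_v1 dist_v2
  (ltnW lt1) (ltnW lt2).
lia.
Qed.

Lemma sum_card_closer_nbrs : \sum_v #|closer_nbrs v| <= #|T|.
Proof.
rewrite -sum1_card.
under eq_bigr => v _ do rewrite -sum1_card.
rewrite (exchange_big_dep predT) //=; apply: leq_sum => u _.
rewrite sum1dep_card; apply/card_le1_eqP => v1 v2.
rewrite [v1 \in _]inE [v2 \in _]inE => u_v1 u_v2; exact/esym/(closer_nbrs_unique u_v1 u_v2).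
Qed.

Lemma closer_nbrs_collision v u u' : e v u -> e v u' -> u != u' -> psi u = psi u' ->
  (u \in closer_nbrs v) || (u' \in closer_nbrs v).
Proof.
move=> e_vu e_vu' neq_uu' psi_uu'; rewrite !inE e_vu e_vu' /=.
have [k dist_u le_kr] := rad_psi u; have [k' dist_u' le_k'r] := rad_psi u'.
have [t dist_v] := dist_nbr_psi e_vu.
rewrite dist_u dist_u' -psi_uu' dist_v /=; rewrite -psi_uu' in dist_u'.
apply: contraLR rad_lt_girth; rewrite negb_or -!leqNgt => /andP [le_kt le_k't].
have := girth_le_two_geodesics e_sym e_irr girth_g e_vu e_vu' neq_uu' dist_v dist_u dist_u'
  le_kt le_k't.
lia.
Qed.

Variable m : nat.

Definition collisions v : {set {ffun 'I_m -> T}} :=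
  [set f : {ffun 'I_m -> T} | [forall i, f i \in nbhd e v] && (#|[set psi (f i) | i : 'I_m]| < m)].

Lemma card_collisions v : #|collisions v|
  <= m * (m.-1 * ((1 + 2 * #|closer_nbrs v|) * #|nbhd e v| ^ m.-1)).
Proof.
apply: card_ffun_noninjective => i j neq_ij.
apply: card_ffun_phi_eq_coords neq_ij _ => u u'; rewrite ![_ \in nbhd e v]inE.
exact: closer_nbrs_collision.
Qed.

Variable d : nat.
Hypotheses (e_reg : regular e d) (m_gt0 : 0 < m).

Lemma sum_card_collisions : \sum_v #|collisions v| <= #|T| * d ^ m.
Proof.
rewrite -sum_nat_const; apply: leq_sum => v _.
rewrite -(e_reg v) -[m in _ ^ m]card_ord -card_ffun_on; apply/subset_leq_card/subsetP => f.
by rewrite inE => /andP [/forallP f_nbhd _]; apply/ffun_onP.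
Qed.

Lemma sum_card_collisions_mul :
  (\sum_v #|collisions v|) * d <= 3 * (m * m.-1) * (#|T| * d ^ m).
Proof.
have d_exp : d ^ m = d ^ m.-1 * d by rewrite -expnSr prednK.
rewrite big_distrl /=.
apply: (@leq_trans (\sum_v m * m.-1 * d ^ m * (1 + 2 * #|closer_nbrs v|))).
  apply: leq_sum => v _; apply: leq_trans (leq_mul (card_collisions v) (leqnn d)) _.
  by rewrite e_reg d_exp; lia.
have sum_le : \sum_v (1 + 2 * #|closer_nbrs v|) <= 3 * #|T|.
  rewrite big_split /= -big_distrr /= sum1_card; change #|xpredT| with #|T|.
  by rewrite (mulSn 2) leq_add2l leq_mul2l sum_card_closer_nbrs orbT.
rewrite -big_distrr /=; apply: leq_trans (leq_mul (leqnn _) sum_le) _.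
by apply: eq_leq; ring.
Qed.

End Displacement.

Local Open Scope ring_scope.

Lemma lt_sqr_div_sqrt (R : rcfType) (p D M : R) : 0 < D -> 1 <= M -> 0 <= p <= 1 ->
  p * D <= 3 * (M * (M - 1)) -> p < M ^+ 2 / Num.sqrt D.
Proof.
move=> D_gt0 M_ge1 /andP [p_ge0 p_le1] pD_le.
have s_gt0 : 0 < Num.sqrt D by rewrite sqrtr_gt0.
have sqr_s : Num.sqrt D * Num.sqrt D = D by rewrite -expr2 sqr_sqrtr ?ltW.
rewrite ltr_pdivlMr //; have [lt_sM|le_Ms] := ltrP (Num.sqrt D) (M ^+ 2).
  by apply: le_lt_trans (ler_piMl (ltW s_gt0) p_le1) lt_sM.
rewrite ltNge; apply/negP => le_Mps.
have : M ^+ 2 * M ^+ 2 <= p * D.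
  rewrite -sqr_s [p * _]mulrA; apply: (le_trans _ (ler_wpM2r (ltW s_gt0) le_Mps)).
  by rewrite ler_wpM2l ?exprn_ge0 ?(le_trans ler01).
(* Contradiction: M^4 > 3 M (M - 1) whenever M >= 1. *)
nra.
Qed.

Lemma dist_le_graph_rad (T : finType) (e : rel T) (psi : T -> T) r :
  graph_rad e psi = Some r -> forall u, exists2 k, dist e u (psi u) = Some k & (k <= r)%N.
Proof.
rewrite /graph_rad; case: ifP => // /forallP dist_fin [<-] u.
case dist_u: (dist e u (psi u)) (dist_fin u) => [k|] // _; exists k => //.
by have := leq_bigmax (F := fun v => odflt 0%N (dist e v (psi v))) u; rewrite /= dist_u.
Qed.

Lemma collision_prob_regular (R : fieldType) (T : finType) (e : rel T) psi m d :
  regular e d ->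
  collision_prob R e psi m = (\sum_v #|collisions e psi m v|)%:R / (#|T| * d ^ m)%:R.
Proof.
move=> e_reg; rewrite /collision_prob.
under [in LHS]eq_bigr => v _ do rewrite e_reg -/(collisions e psi m v).
by rewrite -mulr_sumr -natr_sum natrM natrX invfM mulrA mulrC.
Qed.

Theorem lemma2 (R : rcfType) (T : finType) (e : rel T) (n d g m : nat)
  (psi : T -> T) :
  simple_graph e -> #|T| = n -> regular e d -> girth_ge e g ->
  (0 < d)%N -> (0 < m)%N ->
  (exists2 r : nat, graph_rad e psi = Some r & (r%:R : R) < g%:R / 2 - 1) ->
  collision_prob R e psi m < (m%:R ^+ 2) / Num.sqrt (d%:R : R).
Proof.
move=> [e_sym e_irr] _ e_reg girth_g d_gt0 m_gt0 [r /dist_le_graph_rad rad_psi rad_lt].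
have rad_lt_girth : (2 * r + 2 < g)%N by rewrite -(ltr_nat R) natrD natrM; lra.
have [T_empty|T_gt0] := posnP #|T|.
  by rewrite /collision_prob T_empty invr0 mul0r divr_gt0 ?exprn_gt0 ?sqrtr_gt0 ?ltr0n.
have den_gt0 : (0 < #|T| * d ^ m)%N by rewrite muln_gt0 T_gt0 expn_gt0 d_gt0.
rewrite (collision_prob_regular _ _ _ e_reg); apply: lt_sqr_div_sqrt; rewrite ?ltr0n ?ler1n //.
  rewrite divr_ge0 // ler_pdivrMr ?ltr0n // mul1r ler_nat.
  exact: sum_card_collisions.
rewrite mulrAC ler_pdivrMr ?ltr0n // -[m%:R - 1](natrB _ m_gt0) subn1 -!natrM ler_nat.
exact: (sum_card_collisions_mul e_sym e_irr girth_g rad_lt_girth rad_psi e_reg m_gt0).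
Qed.
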